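(* Let $\mathcal{R}=(W,\unlhd)$ be a poset regarded as a category and consider the presheaf topos $\mathbf{Set}^{\mathcal{R}}$, whose subobject classifier satisfies $\Omega(w)=\{A\cap\uparrow\! w\mid A\subseteq W\text{ upward closed}\}$ with $\uparrow\! w=\{v\mid w\unlhd v\}$. Let $\odot:\Omega\to\Omega$ be the interpretation of $p{:}\Omega\vdash\divideontimes p{:}\Omega$, where $\divideontimes p:=\forall t{:}\Omega.(t\vee(t\Rightarrow p))$. Then for every $w\in W$ and every $A\in\Omega(w)$, $$\odot_w(A)=\{z\in W\mid w\unlhd z\text{ and }\uparrow\! z\setminus\{z\}\subseteq A\}.$$
   Context: $\mathbf{Set}^{\mathcal{R}}$ denotes covariant functors from $\mathcal{R}$ to $\mathbf{Set}$; $\divideontimes$ is expressed in the Mitchell–Bénabou internal language of the topos. *)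

From mathcomp Require Import all_boot all_order.
Set Implicit Arguments. Unset Strict Implicit. Unset Printing Implicit Defensive.
Import Order.TTheory.
Local Open Scope order_scope.

Section KripkeOmega.
Variables (d : Order.disp_t) (W : porderType d).

Definition upclosed (A : W -> Prop) : Prop := forall x y, x <= y -> A x -> A y.

Definition up (w : W) : W -> Prop := fun v => w <= v.

Record Omega (w : W) := MkOmega {
  oset :> W -> Prop;
  oset_spec : exists A : W -> Prop,
      upclosed A /\ forall v, oset v <-> (A v /\ w <= v) }.

(* restriction map Omega(w) -> Omega(v) for w <= v, on underlying sets:
   A |-> A \cap \uparrow v *)
Definition restr (v : W) (A : W -> Prop) : W -> Prop := fun u => A u /\ v <= u.

Definition om_or (T S : W -> Prop) : W -> Prop := fun u => T u \/ S u.
Definition om_imp (v : W) (T S : W -> Prop) : W -> Prop :=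
  fun u => v <= u /\ forall x, u <= x -> T x -> S x.

(* interpretation of  t, p : Omega |- t \/ (t => p) : Omega  at stage v *)
Definition phi_interp (v : W) (T P : W -> Prop) : W -> Prop :=
  om_or T (om_imp v T P).

(* interpretation of  p : Omega |- forall t : Omega. (t \/ (t => p)) : Omega
   at stage w: the sieve of those z >= w such that, for every v >= z and every
   T in Omega(v), phi_v(T, p|_v) is the top element \uparrow v of Omega(v). *)
Definition odot (w : W) (A : Omega w) : W -> Prop :=
  fun z => w <= z /\
    forall (v : W), z <= v -> forall T : Omega v,
      forall u, v <= u -> phi_interp v T (restr v A) u.

End KripkeOmega.

From mathcomp Require Import all_boot all_order.
From Stdlib Require Import Classical FunctionalExtensionality PropExtensionality.
Import Order.TTheory.
Local Open Scope order_scope.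

(* Instantiating the universal quantifier at stage z with the sieve of points
   strictly above z, which fails at z itself, forces p strictly above z.
   Conversely, if p holds strictly above z, then at any u above z a truth
   value t either holds at u or, failing that, holds only strictly above u,
   where p holds; so t \/ (t => p) is true. *)

Section OdotCharacterization.
Variables (d : Order.disp_t) (W : porderType d).

Lemma omega_ge (v : W) (T : Omega v) (x : W) : T x -> v <= x.
Proof. by move=> Tx; case: (oset_spec T) => B [_ /(_ x) [/(_ Tx) []]]. Qed.

Lemma upclosed_gt (z : W) : upclosed (fun x => z < x).
Proof. by move=> x y xy zx; apply: lt_le_trans xy. Qed.

Lemma omega_gt_spec (z : W) : exists B : W -> Prop,
  upclosed B /\ forall v, z < v <-> (B v /\ z <= v).
Proof.
exists (fun x => z < x); split; first exact: upclosed_gt.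
by move=> v; split => [zv | [] //]; split => //; apply: ltW.
Qed.

Definition omega_gt (z : W) : Omega z := MkOmega (omega_gt_spec z).

Lemma odot_gt (w : W) (A : Omega w) (z : W) :
  odot A z -> forall y, z < y -> A y.
Proof.
case=> _ odz y zy.
case: (odz z (lexx z) (omega_gt z) z (lexx z)) => /= [| [_ gt_A]].
  by rewrite ltxx.
by case: (gt_A y (ltW zy) zy).
Qed.

Lemma gt_odot (w : W) (A : Omega w) (z : W) :
  w <= z -> (forall y, z < y -> A y) -> odot A z.
Proof.
move=> wz gt_A; split => // v zv T u vu.
case: (classic (T u)) => Tu; [by left | right].
split => // x ux Tx; split; last exact: omega_ge Tx.
have ux_strict : u < x by rewrite lt_def ux andbT; apply/eqP => xu; rewrite xu in Tx.
by apply: gt_A; apply: le_lt_trans (le_trans zv vu) ux_strict.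
Qed.

Lemma odotE (w : W) (A : Omega w) (z : W) :
  odot A z <-> w <= z /\ forall y, z < y -> A y.
Proof.
split => [odz | [wz gt_A]]; last exact: gt_odot.
by split; [case: odz | exact: odot_gt].
Qed.

End OdotCharacterization.

Theorem fact5p14 (d : Order.disp_t) (W : porderType d) (w : W) (A : Omega w) :
  odot A = (fun z : W => w <= z /\ (forall y : W, z <= y -> y <> z -> A y)).
Proof.
apply: functional_extensionality => z; apply: propositional_extensionality.
rewrite odotE; split => -[wz gt_A]; split => // y.
  by move=> zy yz; apply: gt_A; rewrite lt_def zy andbT; apply/eqP.
by rewrite lt_def => /andP[/eqP yz zy]; apply: gt_A.
Qed.
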